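(* Let $S$ be a semigroup with finite $\mathcal{R}$-height, and let $A$ be a left ideal of $S$ such that every element of $A$ is a regular element of $S$. Then $\mathrm{H}_{\mathcal{R}}(A)=n$, where $n$ is the maximal length of a chain of $\mathcal{R}$-classes of $S$ each of which intersects $A$.
   Context: An element $a\in S$ is regular if $a=aba$ for some $b\in S$. For a semigroup $S$, $S^1$ denotes $S$ with an identity adjoined if necessary. Green's preorder: $a\leq_{\mathcal{R}} b$ iff $aS^1\subseteq bS^1$; $\mathcal{R}$ is the associated equivalence. $\mathcal{R}$-classes are ordered by $R_a\leq R_b$ iff $a\leq_{\mathcal{R}} b$, and the $\mathcal{R}$-height $\mathrm{H}_{\mathcal{R}}$ is the supremum of the cardinalities of chains of $\mathcal{R}$-classes. A left ideal is a non-empty subset $A$ with $SA\subseteq A$; $\mathrm{H}_{\mathcal{R}}(A)$ is computed in the semigroup $A$ itself. *)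

From Stdlib Require Import List.
Import ListNotations.

Section Semigroups.
Variable T : Type.
Variable op : T -> T -> T.

Definition regular (a : T) : Prop := exists b, a = op (op a b) a.

(* Green's R-preorder in S: a S^1 ⊆ b S^1, i.e. a = b or a = b c for some c in S *)
Definition leR (a b : T) : Prop := a = b \/ exists c, a = op b c.
Definition eqR (a b : T) : Prop := leR a b /\ leR b a.

(* Green's R-preorder computed in the subsemigroup A (A closed under op):
   a A^1 ⊆ b A^1, i.e. a = b or a = b c for some c in A *)
Definition leR_in (A : T -> Prop) (a b : T) : Prop :=
  a = b \/ exists c, A c /\ a = op b c.
Definition eqR_in (A : T -> Prop) (a b : T) : Prop := leR_in A a b /\ leR_in A b a.

(* A chain of R-classes is given by a list of representatives whose R-classes
   are pairwise distinct and pairwise comparable; its cardinality is the length. *)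
Definition chain_wrt (le : T -> T -> Prop) (l : list T) : Prop :=
  ForallOrdPairs (fun x y => (le x y \/ le y x) /\ ~ (le x y /\ le y x)) l.

Definition R_chain (l : list T) : Prop := chain_wrt leR l.

(* Chains of R-classes of S each of which intersects A
   (representatives chosen in A) *)
Definition R_chain_meeting (A : T -> Prop) (l : list T) : Prop :=
  Forall A l /\ chain_wrt leR l.

Definition R_chain_in (A : T -> Prop) (l : list T) : Prop :=
  Forall A l /\ chain_wrt (leR_in A) l.

Definition finite_R_height : Prop :=
  exists N : nat, forall l, R_chain l -> length l <= N.

Definition left_ideal (A : T -> Prop) : Prop :=
  (exists a, A a) /\ forall s a, A a -> A (op s a).

End Semigroups.

Definition is_max_length {T : Type} (P : list T -> Prop) (n : nat) : Prop :=
  (exists l, P l /\ length l = n) /\ (forall l, P l -> length l <= n).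

(* If a <=R b in S with a in A and b = b x b regular, then from a = b c we get
   a = b x b c = b (x a), and x a lies in A because A is a left ideal.  Hence on
   elements of A the R-preorder of S coincides with that of the semigroup A, so
   the chains of R-classes of A are exactly the chains of R-classes of S with
   representatives in A; finite R-height of S makes their lengths bounded. *)

From Stdlib Require Import List Classical Lia.

Lemma ForallOrdPairs_impl_on {X : Type} (P : X -> Prop) (R R' : X -> X -> Prop) :
  (forall x y, P x -> P y -> R x y -> R' x y) ->
  forall l, Forall P l -> ForallOrdPairs R l -> ForallOrdPairs R' l.
Proof.
  intros HRR' l HP HR.
  induction HR as [|a l Ha _ IH]; constructor;
    inversion_clear HP as [|? ? Pa Pl]; auto.
  rewrite Forall_forall in *.
  intros y Hy; apply HRR'; auto.
Qed.

Lemma chain_wrt_agree_on {X : Type} (P : X -> Prop) (le le' : X -> X -> Prop) :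
  (forall x y, P x -> P y -> (le x y <-> le' x y)) ->
  forall l, Forall P l -> chain_wrt X le l -> chain_wrt X le' l.
Proof.
  intros Hag; apply (ForallOrdPairs_impl_on P).
  intros x y Px Py.
  rewrite (Hag x y Px Py), (Hag y x Py Px); auto.
Qed.

Lemma is_max_length_exists {X : Type} (P : list X -> Prop) (m : nat) :
  (forall l, P l -> length l <= m) -> (exists l, P l) ->
  exists n, is_max_length P n.
Proof.
  revert P; induction m as [|m IH]; intros P Hbound [l0 Hl0].
  - exists 0; split; auto.
    exists l0; specialize (Hbound l0 Hl0); split; [auto | lia].
  - destruct (classic (exists l, P l /\ length l = S m)) as [Hreached|Hnot].
    + exists (S m); split; auto.
    + apply IH; [|eauto].
      intros l Hl; specialize (Hbound l Hl).
      assert (length l <> S m) by (intro E; apply Hnot; eauto).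
      lia.
Qed.

Lemma is_max_length_ext {X : Type} (P Q : list X -> Prop) (n : nat) :
  (forall l, P l <-> Q l) -> is_max_length P n -> is_max_length Q n.
Proof.
  intros HPQ [[l [Hl Hlen]] Hmax]; split.
  - exists l; split; [apply HPQ|]; auto.
  - intros l' Hl'; apply Hmax, HPQ; auto.
Qed.

Section LeftIdeal.

Variables (T : Type) (op : T -> T -> T).
Hypothesis assoc : forall x y z, op x (op y z) = op (op x y) z.
Variable A : T -> Prop.
Hypothesis A_left_closed : forall s a, A a -> A (op s a).

Lemma leR_in_leR (a b : T) : leR_in T op A a b -> leR T op a b.
Proof. intros [E|[c [_ E]]]; [left | right; exists c]; auto. Qed.

Lemma leR_in_of_regular (a b : T) :
  A a -> regular T op b -> leR T op a b -> leR_in T op A a b.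
Proof.
  intros Ha [x Ex] [E|[c E]]; [left; auto | right].
  exists (op x a); split; auto.
  rewrite E at 2; rewrite assoc, assoc, <- Ex; exact E.
Qed.

Hypothesis A_regular : forall a, A a -> regular T op a.

Lemma R_chain_meeting_iff_in (l : list T) :
  R_chain_meeting T op A l <-> R_chain_in T op A l.
Proof.
  assert (Hag : forall a b, A a -> A b -> (leR T op a b <-> leR_in T op A a b)).
  { intros a b Ha Hb; split; [apply leR_in_of_regular; auto | apply leR_in_leR]. }
  split; intros [HA Hchain]; split; auto;
    revert Hchain; apply chain_wrt_agree_on with A; auto.
  intros x y Hx Hy; symmetry; auto.
Qed.

End LeftIdeal.

Theorem proposition3p12 (T : Type) (op : T -> T -> T)
  (assoc : forall x y z, op x (op y z) = op (op x y) z)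
  (A : T -> Prop)
  (hfin : finite_R_height T op)
  (hA : left_ideal T op A)
  (hreg : forall a, A a -> regular T op a) :
  (exists n, is_max_length (R_chain_meeting T op A) n) /\
  (forall n, is_max_length (R_chain_meeting T op A) n ->
             is_max_length (R_chain_in T op A) n).
Proof.
  destruct hA as [_ A_left_closed], hfin as [N HN].
  split.
  - apply (is_max_length_exists _ N).
    + intros l [_ Hl]; apply HN, Hl.
    + exists nil; split; constructor.
  - intros n; apply is_max_length_ext.
    apply R_chain_meeting_iff_in; auto.
Qed.
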